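(* The function $t\mapsto\dot H(t)/\dot I(t)$ is decreasing on $(0,\infty)$.
   Context: $\dot H(t)=\frac{1}{\ln2}\big(te^{-t}-(1-e^{-t})\ln(1-e^{-t})\big)$ and $\dot I(t)=\frac{t^2}{e^t-1}$ for $t>0$ (the entropy in bits and the normalized Fisher information $\lambda^2 I$ of the indicator that a $\mathrm{Poisson}(t)$ variable, $t=p\lambda$, is nonzero). *)

From Stdlib Require Import Reals.
Open Scope R_scope.

Definition Hdot (t : R) : R :=
  / ln 2 * (t * exp (- t) - (1 - exp (- t)) * ln (1 - exp (- t))).

Definition Idot (t : R) : R := t ^ 2 / (exp t - 1).

From Stdlib Require Import Reals Lra.
From Coquelicot Require Import Coquelicot.
Open Scope R_scope.

(* Write u = e^{-t} and v = 1 - u.  Differentiating the ratio gives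
     d/dt (Hdot t / Idot t) = N(t) / (ln 2 * t^3 * u),
     N(t) = t^2 u^2 - 2 t u v - (v ln v) (t (1 + u) - 2 v),
   so it suffices to show N(t) < 0 for t > 0.  Two elementary bounds do it:
   - t (1 + u) - 2 v > 0, i.e. tanh (t/2) < t/2 (proved by monotonicity);
   - - v ln v <= 1 - v = u, a consequence of ln x <= x - 1.
   Together they give N(t) <= t^2 u^2 - 2 t u v + u (t (1 + u) - 2 v)
   = u (t + 2) (u (1 + t) - 1), which is negative because e^t > 1 + t. *)

Lemma lt_of_derive_pos (f df : R -> R) (a b : R) :
  a < b ->
  (forall x, a <= x <= b -> is_derive f x (df x)) ->
  (forall x, a < x < b -> 0 < df x) ->
  f a < f b.
Proof.
  intros Hab Hder Hpos.
  destruct (MVT_cor2 f df a b Hab) as [c [Hmvt Hc]].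
  { intros c Hc. apply is_derive_Reals, Hder, Hc. }
  assert (0 < df c * (b - a)) by (apply Rmult_lt_0_compat; [apply Hpos, Hc | lra]).
  lra.
Qed.

Lemma ln2_pos : 0 < ln 2.
Proof. rewrite <- ln_1. apply ln_increasing; lra. Qed.

Lemma exp_gt_1 (t : R) : 0 < t -> 1 < exp t.
Proof. intros Ht. rewrite <- exp_0. apply exp_increasing, Ht. Qed.

Lemma exp_neg_lt_1 (t : R) : 0 < t -> exp (- t) < 1.
Proof. intros Ht. rewrite <- exp_0. apply exp_increasing. lra. Qed.

Lemma ln_le_sub_1 (x : R) : 0 < x -> ln x <= x - 1.
Proof.
  intros Hx. pose proof (exp_ineq1_le (ln x)) as Hexp.
  rewrite exp_ln in Hexp by exact Hx. lra.
Qed.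

(* - v ln v <= 1 - v: ln x <= x - 1 at x = 1 / v, multiplied by v. *)
Lemma neg_ln_mul_le (v : R) : 0 < v -> - (ln v * v) <= 1 - v.
Proof.
  intros Hv.
  pose proof (ln_le_sub_1 (/ v) (Rinv_0_lt_compat v Hv)) as Hln.
  rewrite ln_Rinv in Hln by exact Hv.
  assert (Hinv : / v * v = 1) by (field; lra).
  assert (Hmul : - ln v * v <= (/ v - 1) * v) by (apply Rmult_le_compat_r; lra).
  lra.
Qed.

Lemma exp_neg_mul_succ_lt_1 (t : R) : 0 < t -> exp (- t) * (1 + t) < 1.
Proof.
  intros Ht.
  pose proof (exp_ineq1 t ltac:(lra)) as Hexp.
  assert (Hinv : exp (- t) * exp t = 1)
    by (rewrite <- exp_plus; replace (- t + t) with 0 by ring; apply exp_0).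
  assert (exp (- t) * (1 + t) < exp (- t) * exp t)
    by (apply Rmult_lt_compat_l; [apply exp_pos | exact Hexp]).
  lra.
Qed.

(* 2 (1 - e^{-t}) < t (1 + e^{-t}), i.e. tanh (t/2) < t/2: the difference
   vanishes at 0 and has derivative 1 - (1 + x) e^{-x} > 0. *)
Lemma tanh_half_lt (t : R) : 0 < t -> 2 * (1 - exp (- t)) < t * (1 + exp (- t)).
Proof.
  intros Ht.
  set (gap := fun x => x * (1 + exp (- x)) - 2 * (1 - exp (- x))).
  assert (Hgap : gap 0 < gap t).
  { apply lt_of_derive_pos with (df := fun x => 1 - exp (- x) * (1 + x)).
    - exact Ht.
    - intros x _. unfold gap. auto_derive; [exact I | ring].
    - intros x Hx. pose proof (exp_neg_mul_succ_lt_1 x (proj1 Hx)). lra. }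
  unfold gap in Hgap. rewrite Ropp_0, exp_0 in Hgap. lra.
Qed.

Definition slope_numerator (t : R) : R :=
  let u := exp (- t) in let v := 1 - u in
  t ^ 2 * u ^ 2 - 2 * t * u * v - ln v * v * (t * (1 + u) - 2 * v).

Definition ratio_slope (t : R) : R :=
  slope_numerator t / (ln 2 * t ^ 3 * exp (- t)).

(* Quotient-rule computation, normalized with e^t = 1 / e^{-t}. *)
Lemma ratio_derive (t : R) : 0 < t ->
  is_derive (fun x => Hdot x / Idot x) t (ratio_slope t).
Proof.
  intros Ht. unfold Hdot, Idot, ratio_slope, slope_numerator.
  pose proof (exp_gt_1 t Ht). pose proof (exp_neg_lt_1 t Ht).
  pose proof (exp_pos (- t)). pose proof ln2_pos.
  auto_derive.
  - repeat split; try lra; try (apply Rgt_not_eq; lra).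
    apply Rgt_not_eq, Rmult_gt_0_compat; [nra | apply Rinv_0_lt_compat; lra].
  - rewrite !exp_Ropp in *. set (L := ln (1 + - / exp t)).
    unfold Rminus. fold L. field.
    repeat split; try lra; try (apply Rgt_not_eq; lra).
Qed.

(* The key inequality: the two elementary bounds reduce N(t) to
   - u (t + 2) (1 - u (1 + t)) < 0. *)
Lemma slope_numerator_neg (t : R) : 0 < t -> slope_numerator t < 0.
Proof.
  intros Ht. unfold slope_numerator.
  pose proof (exp_pos (- t)). pose proof (exp_neg_lt_1 t Ht).
  pose proof (exp_neg_mul_succ_lt_1 t Ht) as Hsucc.
  pose proof (tanh_half_lt t Ht) as Htanh.
  set (u := exp (- t)) in *.
  pose proof (neg_ln_mul_le (1 - u) ltac:(lra)) as Hent.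
  set (c := t * (1 + u) - 2 * (1 - u)) in *.
  set (e := ln (1 - u) * (1 - u)) in *.
  assert (Hc : 0 < c) by (unfold c; lra).
  assert (Hbound : - e * c <= u * c) by (apply Rmult_le_compat_r; lra).
  assert (Hfactor : t ^ 2 * u ^ 2 - 2 * t * u * (1 - u) + u * c
                    = - (u * ((t + 2) * (1 - u * (1 + t))))) by (unfold c; ring).
  assert (0 < u * ((t + 2) * (1 - u * (1 + t))))
    by (apply Rmult_lt_0_compat; [lra | apply Rmult_lt_0_compat; lra]).
  lra.
Qed.

Lemma ratio_slope_neg (t : R) : 0 < t -> ratio_slope t < 0.
Proof.
  intros Ht. unfold ratio_slope, Rdiv.
  pose proof (slope_numerator_neg t Ht).
  assert (0 < / (ln 2 * t ^ 3 * exp (- t))).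
  { apply Rinv_0_lt_compat, Rmult_lt_0_compat; [|apply exp_pos].
    apply Rmult_lt_0_compat; [apply ln2_pos | apply pow_lt, Ht]. }
  nra.
Qed.

Theorem mainTheorem10 :
  forall s t : R, 0 < s -> s < t -> Hdot t / Idot t < Hdot s / Idot s.
Proof.
  intros s t Hs Hst.
  assert (Hopp : - (Hdot s / Idot s) < - (Hdot t / Idot t)).
  { apply lt_of_derive_pos with
      (f := fun x => - (Hdot x / Idot x)) (df := fun x => - ratio_slope x).
    - exact Hst.
    - intros x Hx. apply (is_derive_opp (fun y => Hdot y / Idot y)), ratio_derive. lra.
    - intros x Hx. pose proof (ratio_slope_neg x ltac:(lra)). lra. }
  lra.
Qed.
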